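(* Let $\mathbf a=(a_1,\dots,a_k)$ be a sequence of nonnegative integers with $\sum_i a_i=n$, and let $0\le j\le k$. Then $|D_j(\mathbf a)|$ equals the coefficient of $x_1^{a_1}\cdots x_k^{a_k}$ in the power series expansion of \[ \frac{1}{(1+x_1)\cdots(1+x_j)(1-x_1-\dots-x_k)}. \]
   Context: For $\mathbf a=(a_1,\dots,a_k)$ with nonnegative integer entries summing to $n$, put $c_0=0$, $c_j=a_1+\dots+a_j$, and let the $j$-th block be $A_j=\{c_{j-1}+1,\dots,c_j\}\subseteq[n]$ (possibly empty). Let $S_{\mathbf a}\subseteq S_n$ be the set of permutations $\pi$ of $[n]$ such that $\pi_i>\pi_{i+1}$ whenever $i$ and $i+1$ lie in the same block (no condition when they lie in different blocks). A fixed point of $\pi$ is an $i$ with $\pi_i=i$. $D_j(\mathbf a)$ denotes the set of permutations in $S_{\mathbf a}$ having no fixed point in $A_1\cup\dots\cup A_j$. *)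

From mathcomp Require Import all_boot all_order all_algebra all_fingroup.
Set Implicit Arguments. Unset Strict Implicit. Unset Printing Implicit Defensive.
Import GRing.Theory Num.Theory.

(* Compositions a = (a_1,...,a_k) are {ffun 'I_k -> nat}; a_{t+1} = a t. *)
(* Positions/values of [n] = {1..n} are encoded by 'I_n = {0..n-1}
   (i <-> i-1); this shift preserves order and fixed points. *)

Definition csum k (a : {ffun 'I_k -> nat}) (t : nat) : nat :=
  \sum_(s < k | (s < t)%N) a s.

(* i and i' (1-indexed positions) lie in a common block A_{t} *)
Definition same_block k (a : {ffun 'I_k -> nat}) (i i' : nat) : bool :=
  [exists t : 'I_k, (csum a t < i)%N && (i' <= csum a t.+1)%N].

Definition in_Sa k (a : {ffun 'I_k -> nat}) n (pi : 'S_n) : bool :=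
  [forall p : 'I_n, forall q : 'I_n,
     ((q == p.+1 :> nat) && same_block a p.+1 q.+1) ==> (pi q < pi p)%N].

Definition Dset k (a : {ffun 'I_k -> nat}) n (j : nat) : {set 'S_n} :=
  [set pi : 'S_n | in_Sa a pi &&
     [forall p : 'I_n, (p.+1 <= csum a j)%N ==> (pi p != p)]].

Definition series (k : nat) := {ffun 'I_k -> nat} -> int.

Definition msum k (m : {ffun 'I_k -> nat}) : nat := \sum_i m i.

Definition sone k : series k := fun m => Posz ((m == [ffun => 0%N]) : nat).

(* the variable x_{i+1} *)
Definition svar k (i : nat) : series k :=
  fun m => Posz ((m == [ffun t : 'I_k => (t == i :> nat) : nat]) : nat).

Definition sadd k (f g : series k) : series k := fun m => (f m + g m)%R.
Definition sopp k (f : series k) : series k := fun m => (- f m)%R.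

(* Cauchy product: (f*g)_m = sum_{u <= m} f_u g_{m-u} *)
Definition smul k (f g : series k) : series k := fun m =>
  (\sum_(u : {ffun 'I_k -> 'I_(msum m).+1} | [forall i, (u i <= m i)%N])
     f [ffun i => (val (u i))] * g [ffun i => (m i - u i)%N])%R.

Definition prod_one_plus k (j : nat) : series k :=
  foldr (fun i acc => smul (sadd (@sone k) (@svar k i)) acc) (@sone k) (iota 0 j).

Definition one_minus_sum k : series k :=
  sadd (@sone k) (@sopp k (foldr (fun i acc => sadd (@svar k i) acc)
                              (fun _ => 0%R) (iota 0 k))).

Definition denom k (j : nat) : series k := smul (@prod_one_plus k j) (@one_minus_sum k).

From mathcomp Require Import all_boot all_order all_algebra all_fingroup.
From mathcomp Require Import zify.
Import GRing.Theory Num.Theory.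
Set Implicit Arguments. Unset Strict Implicit. Unset Printing Implicit Defensive.

(* Let G_j be the series whose coefficient at x^a is |D_j(a)|, and write e_t
   for the t-th unit vector.  For a_t > 0,
     |D_(t-1)(a)| = |D_t(a)| + |D_t(a - e_t)|,
   that is G_(t-1) = (1 + x_t) G_t.  Indeed, a permutation counted on the left
   but not by the first term has a fixed point in the decreasing block A_t,
   hence exactly one; deleting it leaves a permutation in S_(a - e_t) without
   fixed points in A_1 .. A_(t-1).  Conversely, a permutation of S_(a - e_t)
   decreasing on its t-th block admits a position of that block where a fixed
   point can be inserted keeping the block decreasing iff it has no fixed point
   there, and then the position is unique.
   Deleting the largest value, which must start its block, gives
   |S_a| = sum_t [a_t > 0] |S_(a - e_t)|, that is (1 - x_1 - ... - x_k) G_0 = 1.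
   Hence (1 + x_1)..(1 + x_j)(1 - x_1 - ... - x_k) G_j = 1, and this inverse is
   unique since the constant term of the denominator is 1. *)

Section Blocks.
Variable k : nat.
Implicit Types (a : {ffun 'I_k -> nat}) (t : 'I_k).

Definition decr a t : {ffun 'I_k -> nat} := [ffun s => a s - (s == t)].

(* Positions are 0-indexed here: position [p] lies in block [t] iff
   [csum a t <= p < csum a t.+1]. *)
Definition block_of a (p : nat) : nat := \sum_(t < k) (csum a t.+1 <= p).

Lemma csum0 a : csum a 0 = 0.
Proof. by rewrite /csum big_pred0. Qed.

Lemma csumS a t : csum a t.+1 = csum a t + a t.
Proof.
rewrite /csum (bigD1 t) //= addnC; congr (_ + _); apply: eq_bigl => s.
by rewrite ltnS -val_eqE /= andbC -ltn_neqAle.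
Qed.

Lemma csum_msum a m : k <= m -> csum a m = msum a.
Proof. by move=> km; apply: eq_bigl => s; rewrite (leq_trans (ltn_ord s) km). Qed.

Lemma leq_csum a : {homo csum a : m p / m <= p}.
Proof.
move=> m p mp; rewrite /csum [leqRHS]big_mkcond [leqLHS]big_mkcond /=.
by apply: leq_sum => s _; case: ifP => // sm; rewrite (leq_trans sm mp).
Qed.

Lemma leq_csum_msum a m : csum a m <= msum a.
Proof.
by rewrite -(csum_msum a (leq_addl m k)); apply: leq_csum; rewrite leq_addr.
Qed.

Lemma leq_msum a t : a t <= msum a.
Proof. by rewrite /msum (bigD1 t) //= leq_addr. Qed.

Lemma msum_pos a t : 0 < a t -> exists n, msum a = n.+1.
Proof.
by move=> at_gt0; exists (msum a).-1; rewrite prednK // (leq_trans at_gt0 (leq_msum a t)).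
Qed.

Lemma csum_decr a t m : 0 < a t -> csum (decr a t) m = csum a m - (t < m).
Proof.
move=> at_gt0; rewrite /csum; case: (ltnP t m) => tm; last first.
  rewrite subn0; apply: eq_bigr => s sm; rewrite ffunE.
  suff /negbTE -> : s != t by rewrite subn0.
  by apply: contraTneq sm => ->; rewrite -leqNgt.
rewrite (bigD1 t) ?tm // [in RHS](bigD1 t) ?tm // ffunE eqxx.
rewrite (eq_bigr a) => [|s /andP[_ /negbTE st]]; last by rewrite ffunE st subn0.
exact: addnBAC.
Qed.

Lemma msum_decr a t : 0 < a t -> msum (decr a t) = (msum a).-1.
Proof.
by move=> at_gt0; rewrite -!(csum_msum _ (leqnn k)) csum_decr ?ltn_ord ?subn1.
Qed.

Lemma block_ofE a (t p : nat) :
  t < k -> csum a t <= p < csum a t.+1 -> block_of a p = t.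
Proof.
move=> tk /andP[ctp pct]; rewrite /block_of.
rewrite (eq_bigr (fun s : 'I_k => s < t : nat)) => [|s _]; last first.
  case: (ltnP s t) => st; first by rewrite (leq_trans (leq_csum a st)).
  by rewrite leqNgt (leq_trans pct) // leq_csum.
rewrite -big_mkcond -(big_ord_widen _ (fun=> 1) (ltnW tk)) /=.
by rewrite sum1_card card_ord.
Qed.

Lemma block_of_bounds a p : p < msum a ->
  block_of a p < k /\ csum a (block_of a p) <= p < csum a (block_of a p).+1.
Proof.
move=> p_lt; suff [t [tk ht]] : exists t : nat, t < k /\ csum a t <= p < csum a t.+1.
  by rewrite (block_ofE tk ht).
suff : forall m, m <= k -> p < csum a m ->
    exists t : nat, t < k /\ csum a t <= p < csum a t.+1.
  by move/(_ k (leqnn k)); apply; rewrite csum_msum.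
elim=> [|t IH] tk; first by rewrite csum0.
case: (ltnP p (csum a t)) => [/(IH (ltnW tk)) //| ctp pct].
by exists t; rewrite ctp pct.
Qed.

Lemma block_of_mono a : {homo block_of a : p q / p <= q}.
Proof.
move=> p q pq; apply: leq_sum => t _.
by case: (boolP (_ <= p)) => // /leq_trans ->.
Qed.

Lemma block_of_decr a t i q : csum a t <= i < csum a t.+1 ->
  block_of (decr a t) q = block_of a (bump i q).
Proof.
move=> /andP[cti ict]; have at_gt0 : 0 < a t by move: ict; rewrite csumS; lia.
apply: eq_bigr => s _; rewrite csum_decr // ltnS /bump.
case: (leqP t s) => ts.
  have : csum a t.+1 <= csum a s.+1 by apply: leq_csum.
  by case: (leqP i q) => /= iq h; congr (nat_of_bool _); apply/idP/idP; lia.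
have : csum a s.+1 <= csum a t by apply: leq_csum.
by case: (leqP i q) => /= iq h; congr (nat_of_bool _); apply/idP/idP; lia.
Qed.

Lemma block_of_decr_eq a t q : q < (msum a).-1 -> 0 < a t ->
  (block_of (decr a t) q == t) = (csum a t <= q < csum a t.+1 - 1).
Proof.
move=> q_lt at_gt0.
have lo : csum (decr a t) t = csum a t by rewrite csum_decr // ltnn subn0.
have hi : csum (decr a t) t.+1 = csum a t.+1 - 1 by rewrite csum_decr // ltnSn.
apply/eqP/idP => [bq | ht]; last by apply: block_ofE; rewrite ?lo ?hi.
have q_lt' : q < msum (decr a t) by rewrite msum_decr.
by have [_] := block_of_bounds q_lt'; rewrite bq lo hi.
Qed.

End Blocks.

Lemma ltn_bump2 h i j : (bump h i < bump h j) = (i < j).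
Proof. by rewrite !ltnNge leq_bump2. Qed.

Lemma bump_ltn h i : (bump h i < h) = (i < h).
Proof. by rewrite /bump; case: (leqP h i) => hi; apply/idP/idP; lia. Qed.

Lemma ltn_bump h i : (h < bump h i) = (h <= i).
Proof. by rewrite /bump; case: (leqP h i) => hi; apply/idP/idP; lia. Qed.

Section UnliftPerm.
Variable n : nat.

Definition unlift_perm_fun (i : 'I_n.+1) (s : 'S_n.+1) (q : 'I_n) : 'I_n :=
  odflt q (unlift (s i) (s (lift i q))).

Lemma lift_unlift_perm_fun i (s : 'S_n.+1) q :
  lift (s i) (unlift_perm_fun i s q) = s (lift i q).
Proof.
rewrite /unlift_perm_fun; have := neq_lift i q.
by rewrite -(inj_eq (@perm_inj _ s)) => /unlift_some[r sr ->]; rewrite sr.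
Qed.

Lemma unlift_perm_fun_inj i (s : 'S_n.+1) : injective (unlift_perm_fun i s).
Proof.
move=> q r /(congr1 (lift (s i))); rewrite !lift_unlift_perm_fun.
by move/perm_inj/lift_inj.
Qed.

Definition unlift_perm i (s : 'S_n.+1) : 'S_n := perm (@unlift_perm_fun_inj i s).

Lemma lift_permK i j : cancel (lift_perm i j) (unlift_perm i).
Proof.
move=> s; apply/permP => q; apply: (@lift_inj _ j).
by rewrite permE -{1}(lift_perm_id i j s) lift_unlift_perm_fun lift_perm_lift.
Qed.

Lemma unlift_permK i (s : 'S_n.+1) : lift_perm i (s i) (unlift_perm i s) = s.
Proof.
apply/permP => q; case: (unliftP i q) => [r|] ->; rewrite ?lift_perm_id //.
by rewrite lift_perm_lift permE lift_unlift_perm_fun.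
Qed.

Lemma big_lift_perm (R : Type) (idx : R) (op : Monoid.com_law idx) i j
    (F : 'S_n.+1 -> R) :
  \big[op/idx]_(s : 'S_n.+1 | s i == j) F s = \big[op/idx]_(s : 'S_n) F (lift_perm i j s).
Proof.
rewrite (reindex_onto (lift_perm i j) (unlift_perm i)) => [|s /eqP <-]; last first.
  exact: unlift_permK.
by apply: eq_bigl => s; rewrite lift_perm_id eqxx lift_permK eqxx.
Qed.

End UnliftPerm.

Lemma sum_pred_unique (I : finType) (P : pred I) :
  (forall i j, P i -> P j -> i = j) -> \sum_i (P i : nat) = [exists i, P i].
Proof.
move=> Puniq; case: existsP => [[i Pi] | noP]; last first.
  by rewrite big1 // => i; case: (boolP (P i)) => // Pi; case: noP; exists i.
rewrite (bigD1 i) //= Pi big1 // => j; case: (boolP (P j)) => // Pj.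
by rewrite (Puniq _ _ Pj Pi) eqxx.
Qed.

Section FixedPoints.
Variable N : nat.
Implicit Types (s : 'I_N -> 'I_N) (lo hi : nat).

Definition fixfree lo hi s := [forall p : 'I_N, (lo <= p < hi) ==> (s p != p)].

Lemma fixfree_nil lo hi s : hi <= lo -> fixfree lo hi s.
Proof. by move=> hl; apply/forallP => p; apply/implyP; lia. Qed.

Lemma fixfree_cat lo mid hi s : lo <= mid <= hi ->
  fixfree lo hi s = fixfree lo mid s && fixfree mid hi s.
Proof.
move=> /andP[lm mh]; apply/forallP/andP => [H | [/forallP H1 /forallP H2] p].
  by split; apply/forallP => p; apply/implyP => hp; apply: (implyP (H p)); lia.
apply/implyP => hp; case: (ltnP p mid) => pm.
  by apply: (implyP (H1 p)); rewrite pm andbT; case/andP: hp.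
by apply: (implyP (H2 p)); rewrite pm; case/andP: hp.
Qed.

Definition desc_on lo hi s :=
  forall q q' : 'I_N, lo <= q -> q < q' -> q' < hi -> s q' < s q.

Lemma desc_on_fixpoint_unique lo hi s (x y : 'I_N) : desc_on lo hi s ->
  lo <= x < hi -> lo <= y < hi -> s x = x -> s y = y -> x = y.
Proof.
move=> sdesc /andP[lx xh] /andP[ly yh] sx sy.
case: (ltngtP x y) => [xy | yx | /val_inj //].
  by have := sdesc x y lx xy yh; rewrite sx sy ltnNge (ltnW xy).
by have := sdesc y x ly yx xh; rewrite sx sy ltnNge (ltnW yx).
Qed.

Lemma sum_fixpoints lo hi s : desc_on lo hi s ->
  ~~ fixfree lo hi s = \sum_(x : 'I_N | lo <= x < hi) (s x == x) :> nat.
Proof.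
move=> sdesc; rewrite big_mkcond /=.
rewrite (eq_bigr (fun x : 'I_N => (lo <= x < hi) && (s x == x) : nat)); last first.
  by move=> x _; case: ifP.
rewrite sum_pred_unique; last first.
  move=> x y /andP[hx /eqP sx] /andP[hy /eqP sy].
  exact: (desc_on_fixpoint_unique sdesc hx hy sx sy).
congr (nat_of_bool _); apply/forallPn/existsP => [[p] | [p /andP[hp sp]]].
  by rewrite negb_imply negbK => /andP[hp sp]; exists p; rewrite hp sp.
by exists p; rewrite hp sp.
Qed.

(* After inserting the value [v] at position [i] (as [lift_perm i v] does),
   the entries of the block [[lo, hi)] of [s] lying before [i] exceed [v] and
   the others lie below it. *)
Definition insertable (lo hi i v : nat) s :=
  [forall q : 'I_N, (lo <= q < hi) ==> (if q < i then v <= s q else s q < v)].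

Lemma desc_on_le lo hi s (q q' : 'I_N) : desc_on lo hi s ->
  lo <= q -> q <= q' -> q' < hi -> s q' <= s q.
Proof.
move=> sdesc lq qq' q'h; case: (ltngtP q q') => [qq'_lt | q'q | /val_inj -> //].
  exact/ltnW/sdesc.
by move: qq'; rewrite leqNgt q'q.
Qed.

Lemma insertable_exists lo hi s : lo <= hi <= N -> desc_on lo hi s ->
  fixfree lo hi s -> exists x : 'I_N.+1, (lo <= x <= hi) && insertable lo hi x x s.
Proof.
move=> /andP[lh hN] sdesc /forallP ff.
pose f r := if insub r is Some o then val (s o) else 0.
have fE (o : 'I_N) : f o = s o by rewrite /f valK.
(* [x] is the first position of [[lo, hi)] where [s] falls below the
   diagonal, or [hi] if there is none. *)
pose P r := (lo <= r) && ((hi <= r) || (f r < r)).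
have [|x Px x_min] := ex_minnP (ex_intro P hi _); first by rewrite /P lh leqnn.
have lx : lo <= x by case/andP: Px.
have xh : x <= hi by apply: x_min; rewrite /P lh leqnn.
have above (q : 'I_N) : lo <= q -> q < x -> q < s q.
  move=> lq qx; have : ~~ P q by apply/negP => /x_min; lia.
  have sq : (s q : nat) != q by rewrite val_eqE; apply: (implyP (ff q)); rewrite lq; lia.
  by rewrite /P lq fE /=; lia.
have xN : x < N.+1 by lia.
exists (Ordinal xN); rewrite /= lx xh; apply/forallP => q; apply/implyP => /andP[lq qh].
case: ifP => qx.
  have pN : x.-1 < N by lia.
  have := above (Ordinal pN); have := @desc_on_le _ _ _ q (Ordinal pN) sdesc lq.
  rewrite /=; lia.
have xN' : x < N by lia.
have sx : s (Ordinal xN') < x by move: Px; rewrite /P -(fE (Ordinal xN')) /=; lia.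
by have := @desc_on_le _ _ _ (Ordinal xN') q sdesc lx; rewrite /=; lia.
Qed.


Lemma sum_insertable lo hi s : lo <= hi <= N -> desc_on lo hi s ->
  \sum_(x : 'I_N.+1) ((lo <= x <= hi) && insertable lo hi x x s : nat) =
  fixfree lo hi s.
Proof.
move=> /andP[lh hN] sdesc; rewrite sum_pred_unique; last first.
  have two_insertable (x y : nat) : lo <= x -> x < y -> y <= hi ->
      insertable lo hi x x s -> ~~ insertable lo hi y y s.
    move=> lx xy yh /forallP insx; apply/negP => /forallP insy.
    have xN : x < N by lia.
    have := implyP (insx (Ordinal xN)); have := implyP (insy (Ordinal xN)).
    by rewrite /= ltnn xy lx (leq_trans xy yh) => /(_ isT) ysx /(_ isT); lia.
  move=> x y /andP[/andP[lx xh] insx] /andP[/andP[ly yh] insy].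
  apply: val_inj; case: (ltngtP x y) => // [xy | yx].
    by case/negP: (two_insertable _ _ lx xy yh insx).
  by case/negP: (two_insertable _ _ ly yx xh insy).
congr (nat_of_bool _); apply/existsP/idP => [[x /andP[_ /forallP ins]] | ff].
  apply/forallP => q; apply/implyP => hq; apply/eqP => sq.
  by have := implyP (ins q) hq; rewrite sq; case: ifP; lia.
by apply: insertable_exists ff; rewrite ?lh.
Qed.

Lemma insertable_max lo hi x s : lo <= x <= hi -> hi <= N ->
  insertable lo hi x N s = (x == lo).
Proof.
move=> /andP[lx xh] hN; apply/forallP/eqP => [H | -> q]; last first.
  by apply/implyP => /andP[lq _]; rewrite ltnNge lq /=.
apply/eqP; rewrite eqn_leq lx andbT leqNgt; apply/negP => lox.
have loN : lo < N by lia.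
have := implyP (H (Ordinal loN)); rewrite /= leqnn lox (leq_trans lox xh) => /(_ isT).
by rewrite leqNgt ltn_ord.
Qed.

End FixedPoints.

Lemma fixfree_lift n lo hi (i : 'I_n.+1) (s : 'S_n) : hi <= i ->
  fixfree lo hi (lift_perm i i s) = fixfree lo hi s.
Proof.
move=> hi_i; apply/forallP/forallP => H q; apply/implyP => /andP[lq qh].
  have qi : bump i q = q by rewrite /bump leqNgt (leq_trans qh hi_i).
  have := implyP (H (lift i q)); rewrite lift_perm_lift (inj_eq lift_inj) /= qi.
  by rewrite lq qh; apply.
case: (unliftP i q) lq qh => [r|] -> /=; last by rewrite ltnNge hi_i.
rewrite lift_perm_lift (inj_eq lift_inj) /bump; case: (leqP i r) => ir.
  by move=> _ rh; have := leq_trans rh hi_i; rewrite ltnNge add1n ltnW.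
by rewrite add0n => lr rh; apply: (implyP (H r)); rewrite lr.
Qed.

Lemma decreasing_on_classes (b f : nat -> nat) N : {homo b : p q / p <= q} ->
    (forall p, p.+1 < N -> b p = b p.+1 -> f p.+1 < f p) ->
  forall x y, x < y -> y < N -> b x = b y -> f y < f x.
Proof.
move=> b_mono f_desc x; elim=> // y IH; rewrite ltnS leq_eqVlt => /orP[/eqP <-|xy] yN bxy.
  exact: f_desc.
have bxy' : b x = b y.
  by apply/eqP; rewrite eqn_leq b_mono ?(ltnW xy) //= bxy b_mono.
by apply: ltn_trans (IH xy (ltnW yN) bxy'); apply: f_desc; rewrite -?bxy'.
Qed.

Section BlockDescent.
Variable k : nat.
Implicit Types (a : {ffun 'I_k -> nat}) (t : 'I_k).

Definition block_desc a N (s : 'S_N) :=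
  [forall x : 'I_N, forall y : 'I_N,
     (x < y) && (block_of a x == block_of a y) ==> (s y < s x)].

Lemma block_descP a N (s : 'S_N) :
  reflect (forall x y : 'I_N, x < y -> block_of a x = block_of a y -> s y < s x)
          (block_desc a s).
Proof.
apply: (iffP forallP) => [H x y xy bxy | H x]; last first.
  by apply/forallP => y; apply/implyP => /andP[xy /eqP]; apply: H.
by have /forallP/(_ y)/implyP := H x; apply; rewrite xy bxy /=.
Qed.

Lemma same_block_block_of a p : p.+1 < msum a ->
  same_block a p.+1 p.+2 = (block_of a p == block_of a p.+1).
Proof.
move=> p_lt; apply/existsP/eqP => [[t /andP[ctp pct]] | bp].
  by rewrite !(@block_ofE _ a t) //; apply/andP; split => //; lia.
have [tk /andP[ctp _]] := block_of_bounds (ltnW p_lt).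
have [_ /andP[_ pct]] := block_of_bounds p_lt.
by exists (Ordinal tk); rewrite /= ltnS ctp bp.
Qed.

Lemma in_Sa_block_desc a N (s : 'S_N) : N = msum a -> in_Sa a s = block_desc a s.
Proof.
move=> Na; apply/forallP/block_descP => [H x y xy bxy | H p].
  pose f p := if insub p is Some o then val (s o) else 0.
  have fE (o : 'I_N) : f o = s o by rewrite /f valK.
  rewrite -!fE; apply: (@decreasing_on_classes (block_of a)) => //.
    exact: block_of_mono.
  move=> p pN bp; move/forallP/(_ (Ordinal pN))/implyP: (H (Ordinal (ltnW pN))).
  rewrite (fE (Ordinal pN)) (fE (Ordinal (ltnW pN))); apply.
  by rewrite /= eqxx same_block_block_of -?Na // bp eqxx.
apply/forallP => q; apply/implyP => /andP[/eqP qp]; rewrite qp.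
by rewrite same_block_block_of -?Na -?qp // => /eqP; apply: H; rewrite qp.
Qed.

Lemma block_desc_lift a n t (i v : 'I_n.+1) (s : 'S_n) :
  msum a = n.+1 -> csum a t <= i < csum a t.+1 ->
  block_desc a (lift_perm i v s) =
    block_desc (decr a t) s && insertable (csum a t) (csum a t.+1 - 1) i v s.
Proof.
move=> an hi; have bi : block_of a i = t by apply: block_ofE.
have at_gt0 : 0 < a t by move: hi; rewrite csumS; lia.
have bd (q : 'I_n) : block_of (decr a t) q = block_of a (lift i q).
  exact: block_of_decr.
have bt (q : 'I_n) :
    (block_of (decr a t) q == t) = (csum a t <= q < csum a t.+1 - 1).
  by apply: block_of_decr_eq; rewrite ?an.
apply/block_descP/andP => [H | [/block_descP H /forallP C] x y].
  split; first apply/block_descP => x y xy.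
    by have := H (lift i x) (lift i y); rewrite !lift_perm_lift /= !ltn_bump2 -!bd; apply.
  apply/forallP => q; apply/implyP; rewrite -bt bd => /eqP bq.
  case: ifP => qi.
    have := H (lift i q) i; rewrite lift_perm_lift lift_perm_id /=.
    by rewrite bump_ltn ltn_bump qi bq bi; apply.
  have := H i (lift i q); rewrite lift_perm_lift lift_perm_id /=.
  by rewrite ltn_bump bump_ltn (leqNgt i q) qi bq bi; apply.
case: (unliftP i x) => [x'|] ->; case: (unliftP i y) => [y'|] ->;
  rewrite ?lift_perm_lift ?lift_perm_id /= ?ltnn //.
- by rewrite !ltn_bump2 -!bd; apply: H.
- rewrite bump_ltn -bd bi => xi /eqP bx.
  by have := implyP (C x'); rewrite -bt bx xi ltn_bump; apply.
- rewrite ltn_bump -bd bi => iy /esym/eqP by'.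
  by have := implyP (C y'); rewrite -bt by' ltnNge iy bump_ltn; apply.
Qed.

Lemma block_desc_on a N t (s : 'S_N) :
  block_desc a s -> desc_on (csum a t) (csum a t.+1) s.
Proof.
move=> /block_descP sdesc q q' lq qq' q'h; apply: sdesc => //.
by rewrite !(@block_ofE _ a t) //; apply/andP; split; lia.
Qed.

End BlockDescent.

Section Recursions.
Variable k : nat.
Implicit Types (a : {ffun 'I_k -> nat}) (t : 'I_k).

Lemma card_Dset a N J :
  #|Dset a N J| = \sum_(s : 'S_N) (in_Sa a s && fixfree 0 (csum a J) s).
Proof.
rewrite /Dset cardsE -sum1_card big_mkcond /=; apply: eq_bigr => s _.
by rewrite unfold_in; case: ifP.
Qed.

Lemma card_Dset0 a N : #|Dset a N 0| = \sum_(s : 'S_N) in_Sa a s.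
Proof.
by rewrite card_Dset; apply: eq_bigr => s _; rewrite csum0 fixfree_nil ?andbT.
Qed.

Lemma card_Dset_fixed a n t : msum a = n.+1 ->
  #|Dset a n.+1 t| = #|Dset a n.+1 t.+1| +
    \sum_(x : 'I_n.+1 | csum a t <= x < csum a t.+1)
      \sum_(s : 'S_n.+1 | s x == x) (in_Sa a s && fixfree 0 (csum a t) s).
Proof.
move=> an; rewrite !card_Dset.
rewrite (eq_bigr (fun s => (in_Sa a s && fixfree 0 (csum a t.+1) s) +
    (in_Sa a s && fixfree 0 (csum a t) s) * ~~ fixfree (csum a t) (csum a t.+1) s));
  last first.
  move=> s _; rewrite (@fixfree_cat _ 0 (csum a t) (csum a t.+1)) ?leq_csum //.
  by case: (in_Sa a s); case: fixfree; case: fixfree.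
rewrite big_split /=; congr (_ + _).
rewrite (eq_bigr (fun s => \sum_(x : 'I_n.+1 | csum a t <= x < csum a t.+1)
    (in_Sa a s && fixfree 0 (csum a t) s) * (s x == x))) => [|s _]; last first.
  rewrite -big_distrr /=; case: (boolP (in_Sa a s)) => //= sa.
  rewrite sum_fixpoints //; apply: block_desc_on; by rewrite -in_Sa_block_desc.
rewrite exchange_big /=; apply: eq_bigr => x _; rewrite [RHS]big_mkcond /=.
by apply: eq_bigr => s _; case: (s x == x); rewrite ?muln0 ?muln1.
Qed.

Lemma count_Sa_fixed_at a n t (x : 'I_n.+1) :
  msum a = n.+1 -> csum a t <= x < csum a t.+1 ->
  \sum_(s : 'S_n.+1 | s x == x) (in_Sa a s && fixfree 0 (csum a t) s) =
  \sum_(s : 'S_n) (block_desc (decr a t) s && fixfree 0 (csum a t) s &&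
                   insertable (csum a t) (csum a t.+1 - 1) x x s).
Proof.
move=> an hx; rewrite big_lift_perm; apply: eq_bigr => s _.
rewrite (in_Sa_block_desc _ (esym an)) (block_desc_lift _ _ an hx).
rewrite fixfree_lift; last by case/andP: hx.
by rewrite andbAC.
Qed.

Lemma card_Dset_rec a n t : msum a = n.+1 -> 0 < a t ->
  #|Dset a n.+1 t| = #|Dset a n.+1 t.+1| + #|Dset (decr a t) n t.+1|.
Proof.
move=> an at_gt0; set c := csum a t; set d := csum a t.+1.
have d_gt_c : c < d by rewrite /c /d csumS; lia.
have d_le : d <= n.+1 by rewrite -an leq_csum_msum.
have a'n : msum (decr a t) = n by rewrite msum_decr // an.
have c' : csum (decr a t) t = c by rewrite csum_decr // ltnn subn0.
have d' : csum (decr a t) t.+1 = d - 1 by rewrite csum_decr // ltnSn.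
rewrite card_Dset_fixed //; congr (_ + _).
under eq_bigr => x hx do rewrite (count_Sa_fixed_at an hx).
rewrite exchange_big card_Dset /=.
apply: eq_bigr => s _; rewrite (in_Sa_block_desc _ (esym a'n)) d'.
rewrite (@fixfree_cat _ 0 c (d - 1)); last by apply/andP; split; lia.
case: (boolP (block_desc _ s && fixfree 0 c s)) => [/andP[sd sf] | sdf]; last first.
  by rewrite big1 // andbA (negbTE sdf).
rewrite sd sf -sum_insertable; last by rewrite -c' -d'; exact: block_desc_on.
  rewrite big_mkcond /=; apply: eq_bigr => x _; rewrite -/c -/d.
  by rewrite (_ : x < d = (x <= d - 1)); [case: ifP | apply/idP/idP; lia].
by apply/andP; split; lia.
Qed.

Lemma count_Sa_max_at a n t (x : 'I_n.+1) :
  msum a = n.+1 -> csum a t <= x < csum a t.+1 ->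
  \sum_(s : 'S_n.+1 | s x == ord_max) in_Sa a s =
  (x == csum a t :> nat) * \sum_(s : 'S_n) in_Sa (decr a t) s.
Proof.
move=> an hx; have at_gt0 : 0 < a t by move: hx; rewrite csumS; lia.
have a'n : msum (decr a t) = n by rewrite msum_decr // an.
rewrite big_lift_perm big_distrr /=; apply: eq_bigr => s _.
rewrite (in_Sa_block_desc _ (esym an)) (in_Sa_block_desc _ (esym a'n)).
have d_le : csum a t.+1 <= n.+1 by rewrite -an leq_csum_msum.
case/andP: (hx) => lx xd.
rewrite (block_desc_lift _ _ an hx) insertable_max ?lx /=; [|lia..].
by case: (x == _ :> nat); case: block_desc.
Qed.

Lemma sum_block_start a n t : msum a = n.+1 ->
  \sum_(x : 'I_n.+1 | csum a t <= x < csum a t.+1) (x == csum a t :> nat) = (0 < a t : nat).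
Proof.
move=> an; rewrite big_mkcond /=.
rewrite (eq_bigr (fun x : 'I_n.+1 => (x == csum a t :> nat) && (0 < a t) : nat)); last first.
  move=> x _; case: eqP => [->|_]; last by case: ifP.
  by rewrite leqnn csumS -{1}(addn0 (csum a t)) ltn_add2l; case: ifP.
rewrite sum_pred_unique; last first.
  by move=> x y /andP[/eqP xc _] /andP[/eqP yc _]; apply: val_inj; rewrite /= xc yc.
congr (nat_of_bool _); apply/existsP/idP => [[x /andP[_ ->]] // | at_gt0].
have cn : csum a t < n.+1 by rewrite -an; have := leq_csum_msum a t.+1; rewrite csumS; lia.
by exists (Ordinal cn); rewrite /= eqxx.
Qed.

Lemma count_Sa_rec a n : msum a = n.+1 ->
  \sum_(s : 'S_n.+1) in_Sa a s = \sum_t (0 < a t) * \sum_(s : 'S_n) in_Sa (decr a t) s.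
Proof.
move=> an; rewrite (partition_big (fun s : 'S_n.+1 => s^-1%g ord_max) xpredT) //=.
symmetry; under eq_bigr => t _ do rewrite -(@sum_block_start a n t an) big_distrl /=.
rewrite (exchange_big_dep xpredT) //=; apply: eq_bigr => x _.
have x_lt : x < msum a by rewrite an.
have [tk hx] := block_of_bounds x_lt.
rewrite (big_pred1 (Ordinal tk)) => [|t]; last first.
  apply/idP/eqP => [/(block_ofE (ltn_ord t)) bx | ->]; last exact: hx.
  exact: val_inj.
rewrite -count_Sa_max_at //; apply: eq_bigl => s.
by apply/eqP/eqP => [<-|<-]; rewrite ?permKV ?permK.
Qed.

End Recursions.

Section Series.
Local Open Scope ring_scope.
Variable k : nat.
Local Notation fv := {ffun 'I_k -> nat}.
Local Notation bfun B := {ffun 'I_k -> 'I_B.+1}.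
Implicit Types (m : fv) (f g h : series k).

Definition valf B (u : {ffun 'I_k -> 'I_B}) : fv := [ffun i => val (u i)].
Definition subf m (u : fv) : fv := [ffun i => (m i - u i)%N].

(* The coefficient sums of [smul] range over the exponent vectors [u <= m],
   encoded as functions into ['I_B.+1] for some bound [B >= m]. *)
Definition sum_below B m (F : fv -> int) :=
  \sum_(u : bfun B | [forall i, u i <= m i]%N) F (valf u).

Lemma valfE B (u : {ffun 'I_k -> 'I_B}) i : valf u i = u i.
Proof. exact: ffunE. Qed.

Lemma valf_inj B : injective (@valf B).
Proof. by move=> u v e; apply/ffunP => i; apply: val_inj; rewrite /= -!valfE e. Qed.

Lemma smulE f g m : smul f g m = sum_below (msum m) m (fun u => f u * g (subf m u)).
Proof.
by apply: eq_bigr => u _; congr (_ * g _); apply/ffunP => i; rewrite !ffunE.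
Qed.

Lemma subfK m (u : fv) : [forall i, u i <= m i]%N -> subf m (subf m u) = u.
Proof. by move=> /forallP le_um; apply/ffunP => i; rewrite !ffunE subKn. Qed.

Lemma subf_le m (u : fv) : [forall i, subf m u i <= m i]%N.
Proof. by apply/forallP => i; rewrite ffunE leq_subr. Qed.

Definition resize B B' (u : bfun B) : bfun B' :=
  [ffun i => inord (u i)].

Lemma valf_resize B B' (u : bfun B) :
  (forall i, u i <= B')%N -> valf (resize B' u) = valf u.
Proof. by move=> uB; apply/ffunP => i; rewrite !valfE ffunE inordK // ltnS. Qed.

Lemma sum_below_bound B B' m F : (forall i, m i <= B)%N -> (forall i, m i <= B')%N ->
  sum_below B m F = sum_below B' m F.
Proof.
move=> mB mB'.
have resizeK B1 B2 (u : bfun B1) : (forall i, m i <= B2)%N ->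
    [forall i, u i <= m i]%N -> valf (resize B2 u) = valf u.
  by move=> mB2 /forallP um; apply: valf_resize => i; apply: leq_trans (um i) (mB2 i).
have resize_le B1 B2 (u : bfun B1) : (forall i, m i <= B2)%N ->
    [forall i, u i <= m i]%N -> [forall i, resize B2 u i <= m i]%N.
  by move=> mB2 um; apply/forallP => i; rewrite -valfE resizeK // valfE (forallP um).
rewrite /sum_below (reindex_onto (resize B) (resize B')) => [|u um]; last first.
  by apply: valf_inj; rewrite !resizeK ?resize_le.
symmetry; apply: eq_big => [u | u um]; last by rewrite resizeK.
apply/idP/andP => [um | [um /eqP <-]]; last exact: resize_le.
by rewrite resize_le //; split => //; apply/eqP/valf_inj; rewrite !resizeK ?resize_le.
Qed.

Lemma sum_below_delta B m c F : (forall i, m i <= B)%N ->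
  sum_below B m (fun u => Posz (u == c) * F u) =
  if [forall i, c i <= m i]%N then F c else 0.
Proof.
move=> mB; rewrite /sum_below; case: ifP => [/forallP cm | c_not_le]; last first.
  rewrite big1 // => u /forallP um; case: eqP => [uc|]; last by rewrite mul0r.
  by move: c_not_le; rewrite -uc; move/forallP; case=> i; rewrite valfE um.
pose u0 : bfun B := [ffun i => inord (c i)].
have u0c : valf u0 = c.
  by apply/ffunP => i; rewrite valfE ffunE inordK // ltnS (leq_trans (cm i)).
rewrite (bigD1 u0) /=; last by apply/forallP => i; rewrite -valfE u0c cm.
rewrite u0c eqxx mul1r big1 ?addr0 // => u /andP[_ u_neq].
by rewrite -u0c (inj_eq (@valf_inj _)) (negbTE u_neq) mul0r.
Qed.

Definition compf m (u : bfun (msum m)) : bfun (msum m) :=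
  [ffun i => inord (m i - u i)].

Lemma valf_compf m u : valf (@compf m u) = subf m (valf u).
Proof.
apply/ffunP => i; rewrite valfE !ffunE inordK // ltnS.
exact: leq_trans (leq_subr _ _) (leq_msum m i).
Qed.

Lemma smulC f g m : smul f g m = smul g f m.
Proof.
have compf_le (u : bfun (msum m)) : [forall i, @compf m u i <= m i]%N.
  by apply/forallP => i; rewrite -valfE valf_compf (forallP (subf_le m _)).
have compfK (u : bfun (msum m)) : [forall i, u i <= m i]%N -> compf (compf u) = u.
  move=> /forallP um; apply: valf_inj; rewrite !valf_compf subfK //.
  by apply/forallP => i; rewrite valfE um.
rewrite !smulE /sum_below (reindex_onto (@compf m) (@compf m)) => [|u /compfK //].
apply: eq_big => [u | u /andP[_ /eqP uK]].
  by rewrite compf_le; apply/eqP/idP => [<- | /compfK]; rewrite ?compf_le.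
have um : [forall i, valf u i <= m i]%N.
  by rewrite -uK; apply/forallP => i; rewrite valfE (forallP (compf_le _)).
by rewrite valf_compf subfK // mulrC.
Qed.

Definition addf (v u : fv) : fv := [ffun i => (v i + u i)%N].

Lemma sum_below_shift N m (u : fv) F : (forall i, m i <= N)%N ->
    [forall i, u i <= m i]%N ->
  \sum_(w : bfun N | [forall i, w i <= m i]%N && [forall i, u i <= valf w i]%N)
     F (valf w) =
  sum_below N (subf m u) (fun v => F (addf v u)).
Proof.
move=> mN /forallP um.
pose shift (v : bfun N) : bfun N :=
  [ffun i => inord (v i + u i)].
pose unshift (w : bfun N) : bfun N :=
  [ffun i => inord (w i - u i)].
have unshiftE (w : bfun N) i : unshift w i = (w i - u i)%N :> nat.
  by rewrite ffunE inordK // (leq_ltn_trans (leq_subr _ _)).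
have shiftE (v : bfun N) : [forall i, v i <= subf m u i]%N -> valf (shift v) = addf (valf v) u.
  move=> /forallP vm; apply/ffunP => i; rewrite !ffunE /= inordK // ltnS.
  have := vm i; rewrite ffunE => vmu; apply: leq_trans (mN i).
  by rewrite -(subnK (um i)) leq_add2r.
have shift_le v : [forall i, shift v i <= m i]%N && [forall i, u i <= valf (shift v) i]%N &&
    (unshift (shift v) == v) = [forall i, v i <= subf m u i]%N.
  apply/idP/idP => [/andP[/andP[/forallP sm _] /eqP <-] | vm].
    by apply/forallP => i; rewrite unshiftE [subf _ _ _]ffunE leq_sub2r.
  have sv := shiftE v vm; move/forallP: vm => vm.
  have vmu i : (v i + u i <= m i)%N.
    by have := vm i; rewrite ffunE leq_subRL ?um // addnC.
  apply/andP; split; first (apply/andP; split).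
  - by apply/forallP => i; rewrite -valfE sv ffunE valfE vmu.
  - by apply/forallP => i; rewrite sv ffunE leq_addl.
  - by apply/eqP/ffunP => i; apply/val_inj; rewrite /= unshiftE -valfE sv ffunE valfE addnK.
rewrite /sum_below (reindex_onto shift unshift) => [|w /andP[/forallP wm /forallP uw]]; last first.
  apply/ffunP => i; apply: val_inj; rewrite ffunE unshiftE subnK; last first.
    by rewrite -valfE uw.
  by rewrite /= inordK.
by apply: eq_big => [v | v]; rewrite ?shift_le // => /shiftE ->.
Qed.

Lemma smulA f g h m : smul (smul f g) h m = smul f (smul g h) m.
Proof.
pose N := msum m; have mN i : (m i <= N)%N by apply: leq_msum.
rewrite !smulE /sum_below.
rewrite (eq_bigr (fun w : bfun N =>
   \sum_(u : bfun N | [forall i, u i <= valf w i]%N)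
      f (valf u) * g (subf (valf w) (valf u)) * h (subf m (valf w)))); last first.
  move=> w /forallP wm; rewrite smulE (@sum_below_bound _ N) ?mulr_suml // => i.
    exact: leq_msum.
  by rewrite valfE (leq_trans (wm i)).
rewrite (exchange_big_dep (fun u : bfun N => [forall i, u i <= m i]%N)) /=; last first.
  move=> w u /forallP wm /forallP uw; apply/forallP => i.
  by apply: leq_trans (uw i) _; rewrite valfE wm.
apply: eq_bigr => u um; rewrite smulE (@sum_below_bound _ N); last 2 first.
- exact: leq_msum.
- by move=> i; rewrite ffunE (leq_trans (leq_subr _ _)).
rewrite (eq_bigl (fun w : bfun N =>
    [forall i, w i <= m i]%N && [forall i, valf u i <= valf w i]%N)); last first.
  by move=> w; congr (_ && _); apply: eq_forallb => i; rewrite !valfE.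
rewrite (@sum_below_shift N m (valf u)
    (fun w => f (valf u) * g (subf w (valf u)) * h (subf m w))) //; last first.
  by apply/forallP => i; rewrite valfE (forallP um).
rewrite /sum_below mulr_sumr; apply: eq_bigr => v _; rewrite mulrA.
congr (_ * g _ * h _); apply/ffunP => i; first by rewrite !ffunE addnK.
by rewrite !ffunE addnC subnDA.
Qed.

Lemma eq_smull f f' g m : f =1 f' -> smul f g m = smul f' g m.
Proof. by move=> ff'; apply: eq_bigr => u _; rewrite ff'. Qed.

Lemma eq_smulr f g g' m : g =1 g' -> smul f g m = smul f g' m.
Proof. by move=> gg'; apply: eq_bigr => u _; rewrite gg'. Qed.

Lemma smulDl f f' g m : smul (sadd f f') g m = smul f g m + smul f' g m.
Proof. by rewrite /smul -big_split; apply: eq_bigr => u _; rewrite mulrDl. Qed.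

Lemma smulNl f g m : smul (sopp f) g m = - smul f g m.
Proof. by rewrite /smul -sumrN; apply: eq_bigr => u _; rewrite mulNr. Qed.

Lemma smul0l g m : smul (fun=> 0) g m = 0.
Proof. by rewrite /smul big1 // => u _; rewrite mul0r. Qed.

Lemma smul1l g m : smul (@sone k) g m = g m.
Proof.
rewrite smulE (@sum_below_delta _ m [ffun=> 0%N] (fun u => g (subf m u))); last first.
  exact: leq_msum.
rewrite (_ : [forall i, _] = true); last by apply/forallP => i; rewrite ffunE.
by congr g; apply/ffunP => i; rewrite !ffunE subn0.
Qed.

Lemma smul_svar (t : 'I_k) g m :
  smul (@svar k t) g m = if (0 < m t)%N then g (decr m t) else 0.
Proof.
rewrite smulE sum_below_delta; last exact: leq_msum.
have -> : [forall s, [ffun s : 'I_k => (s == t :> nat) : nat] s <= m s]%N = (0 < m t)%N.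
  apply/forallP/idP => [/(_ t) | mt s]; first by rewrite ffunE eqxx.
  by rewrite ffunE; case: eqP => // /val_inj ->.
by congr (if _ then g _ else _); apply/ffunP => s; rewrite !ffunE.
Qed.

Lemma msum_subf m (u : fv) : [forall i, u i <= m i]%N ->
  (msum (subf m u) + msum u)%N = msum m.
Proof.
move=> /forallP um; rewrite /msum -big_split; apply: eq_bigr => i _.
by rewrite ffunE; apply: subnK.
Qed.

(* Induction on the degree [msum m]: as [D] has constant term 1, the
   coefficient of [smul D g] at [m] is [g m] plus terms of [g] of smaller
   degree. *)
Lemma smulI D g1 g2 : D [ffun=> 0%N] = 1 ->
  (forall m, smul D g1 m = smul D g2 m) -> forall m, g1 m = g2 m.
Proof.
move=> D0 eqD m; elim: {m}(msum m).+1 {-2}m (ltnSn (msum m)) => // N IH m.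
rewrite ltnS => mN; have := eqD m; rewrite !smulE /sum_below.
pose u0 : bfun (msum m) := [ffun=> ord0].
have u0_le : [forall i, u0 i <= m i]%N by apply/forallP => i; rewrite ffunE.
have u0E : valf u0 = [ffun=> 0%N] by apply/ffunP => i; rewrite !ffunE.
have subf0 : subf m [ffun=> 0%N] = m by apply/ffunP => i; rewrite !ffunE subn0.
rewrite (bigD1 u0) // [RHS](bigD1 u0) //= u0E subf0 D0 !mul1r.
rewrite (eq_bigr (fun u => D (valf u) * g2 (subf m (valf u)))); first exact: addIr.
move=> u /andP[um u_neq]; congr (_ * _); apply: IH.
have um' : [forall i, valf u i <= m i]%N by apply/forallP => i; rewrite valfE (forallP um).
have u_pos : (0 < msum (valf u))%N.
  have [i ui] : exists i, u i != ord0.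
    apply/existsP; apply: contraNT u_neq => /existsPn u_eq0.
    by apply/eqP/ffunP => i; rewrite ffunE; apply/eqP/negPn.
  by apply: leq_trans (leq_msum _ i); rewrite valfE lt0n.
by have := msum_subf um'; lia.
Qed.
End Series.

Section Main.
Local Open Scope ring_scope.
Variable k : nat.
Implicit Types (m : {ffun 'I_k -> nat}) (g : series k).

Definition Dseries (j : nat) : series k := fun m => Posz #|Dset m (msum m) j|.

Lemma Dseries_step (t : 'I_k) m :
  Dseries t m = Dseries t.+1 m + smul (@svar k t) (Dseries t.+1) m.
Proof.
rewrite smul_svar; case: (posnP (m t)) => mt.
  by rewrite addr0 /Dseries /Dset csumS mt addn0.
have [n mn] := msum_pos mt.
by rewrite /Dseries mn (card_Dset_rec mn mt) PoszD msum_decr // mn.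
Qed.

Definition prod_one_plus_from l len : series k :=
  foldr (fun i acc => smul (sadd (@sone k) (@svar k i)) acc) (@sone k) (iota l len).

Lemma smul_prod_one_plus_Dseries l len m : (l + len <= k)%N ->
  smul (prod_one_plus_from l len) (Dseries (l + len)) m = Dseries l m.
Proof.
elim: len l m => [|len IH] l m lk; first by rewrite addn0 smul1l.
have lk' : (l < k)%N by rewrite -addn1 (leq_trans _ lk) // leq_add2l.
rewrite /= smulA (@eq_smulr _ _ _ (Dseries l.+1)); last first.
  by move=> m'; rewrite addnS -addSn IH // addSnnS.
by rewrite smulDl smul1l (Dseries_step (Ordinal lk')).
Qed.

Lemma smul_sum_svar (s : seq nat) g m :
  smul (foldr (fun i acc => sadd (@svar k i) acc) (fun=> 0) s) g m =
  \sum_(i <- s) smul (@svar k i) g m.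
Proof.
elim: s => [|i s IH] /=; first by rewrite big_nil smul0l.
by rewrite smulDl IH big_cons.
Qed.

Lemma smul_one_minus_sum g m : smul (@one_minus_sum k) g m =
  g m - \sum_(t < k) (if (0 < m t)%N then g (decr m t) else 0).
Proof.
rewrite /one_minus_sum smulDl smul1l smulNl smul_sum_svar.
rewrite -[in iota 0 k](subn0 k) -/(index_iota 0 k) big_mkord.
by congr (_ - _); apply: eq_bigr => t _; rewrite smul_svar.
Qed.

Lemma smul_one_minus_sum_Dseries0 m : smul (@one_minus_sum k) (Dseries 0) m = @sone k m.
Proof.
rewrite smul_one_minus_sum /sone; case: eqP => [-> | m_neq0].
  rewrite big1 => [|t _]; last by rewrite ffunE.
  rewrite subr0 /Dseries (_ : msum _ = 0%N); last by rewrite /msum big1 // => t; rewrite ffunE.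
  rewrite card_Dset0 (eq_bigr (fun=> 1%N)) => [|s _]; first by rewrite sum1_card card_Sn.
  by rewrite (_ : in_Sa _ s) //; apply/forallP => -[].
have [t mt] : exists t, (0 < m t)%N.
  apply/existsP; apply: contra_notT m_neq0 => /existsPn m0; apply/ffunP => t.
  by rewrite ffunE; apply/eqP; rewrite -leqn0 leqNgt m0.
have [n mn] := msum_pos mt.
rewrite /Dseries mn card_Dset0 (count_Sa_rec mn) (big_morph Posz PoszD (erefl 0%:Z)).
apply/eqP; rewrite subr_eq0; apply/eqP/eq_bigr => s _.
case: ifP => ms; last by rewrite mul0n.
by rewrite mul1n msum_decr // mn card_Dset0.
Qed.

Lemma prod_one_plus_from0 l len : (l + len <= k)%N ->
  prod_one_plus_from l len [ffun=> 0%N] = 1.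
Proof.
elim: len l => [|len IH] l lk; first by rewrite /prod_one_plus_from /= /sone eqxx.
have lk' : (l < k)%N by rewrite -addn1 (leq_trans _ lk) // leq_add2l.
rewrite /prod_one_plus_from /= smulDl smul1l (smul_svar (Ordinal lk')) ffunE addr0.
by apply: IH; rewrite addSnnS.
Qed.

End Main.

Theorem mainTheorem1 (k : nat) (a : {ffun 'I_k -> nat}) (n j : nat)
    (hn : n = \sum_(i < k) a i) (hj : (j <= k)%N) :
  (exists g : series k, forall m, smul (@denom k j) g m = @sone k m) /\
  (forall g : series k, (forall m, smul (@denom k j) g m = @sone k m) ->
     g a = Posz #|Dset a n j|).
Proof.
have prodE : @prod_one_plus k j = prod_one_plus_from 0 j by [].
have denom_Dseries m : smul (@denom k j) (Dseries j) m = @sone k m.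
  rewrite /denom prodE (eq_smull _ _ (smulC _ _)) smulA.
  rewrite (eq_smulr _ _ (fun m' => @smul_prod_one_plus_Dseries k 0 j m' hj)).
  exact: smul_one_minus_sum_Dseries0.
have denom0 : @denom k j [ffun=> 0%N] = 1%R.
  rewrite /denom prodE smulC smul_one_minus_sum big1 => [|t _]; last by rewrite ffunE.
  by rewrite subr0 (@prod_one_plus_from0 k 0 j hj).
split=> [|g gE]; first by exists (Dseries j).
have := smulI denom0 (fun m => etrans (gE m) (esym (denom_Dseries m))) a.
by rewrite /Dseries hn.
Qed.
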